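(* Let $\eta\in\mathbb{C}$, $N\in\mathbb{N}^*$, $R_{a,b}(\lambda)=\lambda I_{a,b}+\eta\mathbb{P}_{a,b}$ on $\mathbb{C}^3\otimes\mathbb{C}^3$ ($\mathbb{P}$ the permutation), let $K$ be a $w$-simple $3\times3$ matrix, $\mathcal{H}=(\mathbb{C}^3)^{\otimes N}$, and $T_1^{(K)}(\lambda)=\operatorname{tr}_a\big(K_aR_{a,N}(\lambda-\xi_N)\cdots R_{a,1}(\lambda-\xi_1)\big)$. Write $K=W_KK_JW_K^{-1}$ with $K_J=\begin{pmatrix}\mathsf k_0&\mathsf y_1&0\\0&\mathsf k_1&\mathsf y_2\\0&0&\mathsf k_2\end{pmatrix}$ an upper-triangular Jordan form, where (up to permutation of basis vectors) one of the following cases holds: (i) $\mathsf k_0,\mathsf k_1,\mathsf k_2$ pairwise distinct and $\mathsf y_1=\mathsf y_2=0$; (ii) $\mathsf k_0=\mathsf k_1\neq\mathsf k_2$, $\mathsf y_1=1$, $\mathsf y_2=0$; (iii) $\mathsf k_0=\mathsf k_1=\mathsf k_2$, $\mathsf y_1=\mathsf y_2=1$. Then for almost any choice of $\langle S|\in\mathcal{H}^*$ and of the inhomogeneities $\xi_1,\dots,\xi_N$ satisfying $\xi_a\neq\xi_b+r\eta$ for all $a\neq b$ and $r\in\{-2,-1,0,1,2\}$, the set $$\langle h_1,\dots,h_N|:=\langle S|\prod_{n=1}^N\big(T_1^{(K)}(\xi_n)\big)^{h_n},\qquad(h_1,\dots,h_N)\in\{0,1,2\}^N,$$ is a basis of $\mathcal{H}^*$.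 In particular one can take $\langle S|=\big(\bigotimes_{a=1}^N(x,y,z)_a\big)\Gamma_W^{-1}$ with $\Gamma_W=\bigotimes_{a=1}^NW_{K,a}$, requiring $xyz\neq0$ in case (i), $xz\neq0$ in case (ii), and $x\neq0$ in case (iii).
   Context: A matrix is $w$-simple if each of its eigenvalues has exactly one eigenvector up to scalar multiplication. $W_{K,a}$ denotes $W_K$ acting on the $a$-th tensor factor; $(x,y,z)_a$ is a row vector in the $a$-th factor. *)

From HB Require Import structures.
From mathcomp Require Import all_boot all_order all_algebra.
From mathcomp Require Import mpoly.
From mathcomp Require Import reals.
From mathcomp Require Import complex.

Set Implicit Arguments.
Unset Strict Implicit.
Unset Printing Implicit Defensive.

Import GRing.Theory Num.Theory.
Local Open Scope ring_scope.

(* Index set of the standard basis of H = (C^3)^{(x) N}: maps 'I_N -> 'I_3. *)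
Notation qidx N := {ffun 'I_N -> 'I_3}.
(* Index set of the standard basis of C^3_a (x) H (auxiliary space first). *)
Notation aidx N := ('I_3 * {ffun 'I_N -> 'I_3})%type.

Section SoV.
Variable C : fieldType.

Definition mxT (T : finType) (f : T -> T -> C) : 'M[C]_#|T| :=
  \matrix_(i, j) f (enum_val i) (enum_val j).

Definition set_at N (s : qidx N) (n : 'I_N) (b : 'I_3) : qidx N :=
  [ffun m => if m == n then b else s m].

(* R_{a,n}(mu) = mu I_{a,n} + eta P_{a,n} on C^3_a (x) H, where P_{a,n}
   permutes the auxiliary factor a with the n-th quantum factor:
   P |b, tau> = |tau_n, tau[n := b]>. *)
Definition Rmat (eta : C) N (n : 'I_N) (mu : C) : 'M[C]_#|{: aidx N}| :=
  mxT (fun p q : aidx N =>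
         mu * (p == q)%:R + eta * (p == (q.2 n, set_at q.2 n q.1))%:R).

Definition Kaux N (K : 'M[C]_3) : 'M[C]_#|{: aidx N}| :=
  mxT (fun p q : aidx N => K p.1 q.1 * (p.2 == q.2)%:R).

Definition ptrace N (M : 'M[C]_#|{: aidx N}|) : 'M[C]_#|qidx N| :=
  mxT (fun s t : qidx N =>
         \sum_(a : 'I_3) M (enum_rank ((a, s) : aidx N)) (enum_rank ((a, t) : aidx N))).

(* K_a R_{a,N}(lam - xi_N) ... R_{a,1}(lam - xi_1) *)
Definition monodromyK (eta : C) N (K : 'M[C]_3) (xi : 'I_N -> C) (lam : C)
  : 'M[C]_#|{: aidx N}| :=
  Kaux N K *m foldr (fun n M => Rmat eta n (lam - xi n) *m M) 1%:M
                    (rev (enum 'I_N)).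

Definition transferK (eta : C) N (K : 'M[C]_3) (xi : 'I_N -> C) (lam : C)
  : 'M[C]_#|qidx N| :=
  ptrace (monodromyK eta K xi lam).

Definition mxpow n (A : 'M[C]_n) (k : nat) : 'M[C]_n :=
  iter k (fun M => M *m A) 1%:M.

(* <h_1,...,h_N| = <S| prod_n T_1^{(K)}(xi_n)^{h_n}  (covectors are row vectors,
   operators act on them by right multiplication) *)
Definition sov_bra (eta : C) N (K : 'M[C]_3) (xi : 'I_N -> C)
  (S : 'rV[C]_#|qidx N|) (h : qidx N) : 'rV[C]_#|qidx N| :=
  S *m foldr (fun n M => mxpow (transferK eta K xi (xi n)) (h n) *m M) 1%:M
             (enum 'I_N).

Definition sov_basis (eta : C) N (K : 'M[C]_3) (xi : 'I_N -> C)
  (S : 'rV[C]_#|qidx N|) : Prop :=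
  basis_of fullv [seq sov_bra eta K xi S h | h <- enum {ffun 'I_N -> 'I_3}].

Definition wsimple (K : 'M[C]_3) : Prop :=
  forall a : C, eigenvalue K a -> \rank (eigenspace K a) = 1%N.

Definition KJ (k0 k1 k2 y1 y2 : C) : 'M[C]_3 :=
  \matrix_(i < 3, j < 3)
    if (i == j :> nat) then
      (if (i == 0%N :> nat) then k0 else if (i == 1%N :> nat) then k1 else k2)
    else if (j == i.+1 :> nat) then
      (if (i == 0%N :> nat) then y1 else y2)
    else 0.

Definition jcase1 (k0 k1 k2 y1 y2 : C) : Prop :=
  [/\ k0 != k1, k0 != k2, k1 != k2, y1 = 0 & y2 = 0].
Definition jcase2 (k0 k1 k2 y1 y2 : C) : Prop :=
  [/\ k0 = k1, k1 != k2, y1 = 1 & y2 = 0].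
Definition jcase3 (k0 k1 k2 y1 y2 : C) : Prop :=
  [/\ k0 = k1, k1 = k2, y1 = 1 & y2 = 1].

Definition admissible (eta : C) N (xi : 'I_N -> C) : Prop :=
  forall a b : 'I_N, a != b ->
  forall r : int, (-2 <= r <= 2)%R -> xi a != xi b + r%:~R * eta.

Definition GammaW N (W : 'M[C]_3) : 'M[C]_#|qidx N| :=
  mxT (fun s t : qidx N => \prod_(n < N) W (s n) (t n)).

Definition prod_covec N (x y z : C) : 'rV[C]_#|qidx N| :=
  \row_i \prod_(n < N)
     (let k := (enum_val i : qidx N) n in
      if (k == 0%N :> nat) then x else if (k == 1%N :> nat) then y else z).

(* coordinates (S, xi) as a point of C^{3^N + N} *)
Definition coords N (S : 'rV[C]_#|qidx N|) (xi : 'I_N -> C)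
  : 'I_(#|qidx N| + N) -> C :=
  fun i => match split i with inl j => S 0 j | inr j => xi j end.

End SoV.

From HB Require Import structures.
From mathcomp Require Import all_boot all_order all_algebra.
From mathcomp Require Import mpoly.
From mathcomp Require Import reals.
From mathcomp Require Import complex.
From mathcomp Require Import boolp.
From mathcomp Require Import ring.

Set Implicit Arguments.
Unset Strict Implicit.
Unset Printing Implicit Defensive.
Import GRing.Theory Num.Theory.
Local Open Scope ring_scope.

(* The bras <h| are the rows of a square matrix whose determinant is a
   polynomial in the entries of <S| and in xi, so it suffices to find one point
   where it does not vanish.  Take xi_n = n and a polynomial coupling X eta.  To
   first order in X, T_1^{(K)}(xi_n) is X prod_{m <> n} (xi_n - xi_m) K_n, so
   after dividing <h| by X^(h_1 + ... + h_N) the bras become, at X = 0, the rows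
   of (x)_n V Gamma_W^{-1}, where V is the Krylov matrix with rows
   (x,y,z) K_J^k, k = 0, 1, 2; a 3x3 determinant shows that V is invertible
   exactly under the stated conditions on x, y, z.  Hence some coupling u eta
   with u <> 0 works, and by homogeneity so does xi_n = n / u at coupling eta. *)

Section GenericTransfer.
Variables (A : comNzRingType) (N : nat).
Local Notation dimQ := #|qidx N|.
Local Notation dimAQ := #|{: aidx N}|.

(* [gmxT], [gRmat], [gKaux], [gptrace], [gtransfer] and [gmxpow] are [mxT],
   [Rmat], [Kaux], [ptrace], [transferK] and [mxpow] over a commutative ring
   instead of a field, so that they can be evaluated over polynomial rings;
   over a field they are convertible to the originals. *)

Definition gmxT (T : finType) (f : T -> T -> A) : 'M[A]_#|T| :=
  \matrix_(i, j) f (enum_val i) (enum_val j).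

Definition Pmat (n : 'I_N) : 'M[A]_dimAQ :=
  gmxT (fun p q : aidx N => (p == (q.2 n, set_at q.2 n q.1))%:R).

Definition gRmat (eta : A) (n : 'I_N) (mu : A) : 'M[A]_dimAQ :=
  gmxT (fun p q : aidx N =>
         mu * (p == q)%:R + eta * (p == (q.2 n, set_at q.2 n q.1))%:R).

Definition gKaux (K : 'M[A]_3) : 'M[A]_dimAQ :=
  gmxT (fun p q : aidx N => K p.1 q.1 * (p.2 == q.2)%:R).

Definition gptrace (M : 'M[A]_dimAQ) : 'M[A]_dimQ :=
  gmxT (fun s t : qidx N =>
    \sum_(a : 'I_3) M (enum_rank ((a, s) : aidx N)) (enum_rank ((a, t) : aidx N))).

Definition gRprod (eta : A) (xi : 'I_N -> A) (lam : A) : 'M[A]_dimAQ :=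
  foldr (fun n M => gRmat eta n (lam - xi n) *m M) 1%:M (rev (enum 'I_N)).

Definition gtransfer (eta : A) (K : 'M[A]_3) (xi : 'I_N -> A) (lam : A) :=
  gptrace (gKaux K *m gRprod eta xi lam).

Definition gmxpow n (M : 'M[A]_n) k := iter k (fun X => X *m M) 1%:M.

Definition bra (S : 'rV[A]_dimQ) (T : 'I_N -> 'M[A]_dimQ) (h : qidx N) :=
  S *m foldr (fun n M => gmxpow (T n) (h n) *m M) 1%:M (enum 'I_N).

Definition bra_mx S T : 'M[A]_dimQ := \matrix_i bra S T (enum_val i).

Definition tensor_mx (F : 'I_N -> 'M[A]_3) : 'M[A]_dimQ :=
  gmxT (fun s t : qidx N => \prod_m F m (s m) (t m)).

Definition tensor_row (v : 'I_N -> 'rV[A]_3) : 'rV[A]_dimQ :=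
  \row_t \prod_m v m 0 ((enum_val t : qidx N) m).

Definition site_mx (n : 'I_N) (K : 'M[A]_3) : 'M[A]_dimQ :=
  tensor_mx (fun m => if m == n then K else 1%:M).

Lemma eq_gmxT (T : finType) (f g : T -> T -> A) : f =2 g -> gmxT f = gmxT g.
Proof. by move=> fg; apply/matrixP=> i j; rewrite !mxE fg. Qed.

Lemma sum_enum_val (T : finType) (F : T -> A) :
  \sum_(k < #|T|) F (enum_val k) = \sum_(t : T) F t.
Proof. by rewrite -(big_enum_val (A := T)). Qed.

Lemma gRmatE eta n mu : gRmat eta n mu = mu *: 1%:M + eta *: Pmat n.
Proof. by apply/matrixP=> i j; rewrite !mxE (inj_eq enum_val_inj) mulr_natr. Qed.

Lemma gptraceD M1 M2 : gptrace (M1 + M2) = gptrace M1 + gptrace M2.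
Proof. by apply/matrixP=> i j; rewrite !mxE -big_split; apply: eq_bigr => a _; rewrite mxE. Qed.

Lemma gptraceZ c M : gptrace (c *: M) = c *: gptrace M.
Proof. by apply/matrixP=> i j; rewrite !mxE mulr_sumr; apply: eq_bigr => a _; rewrite mxE. Qed.

Lemma tensor_mxM F G : tensor_mx F *m tensor_mx G = tensor_mx (fun m => F m *m G m).
Proof.
apply/matrixP=> i j; rewrite !mxE.
under [RHS]eq_bigr do rewrite mxE.
rewrite bigA_distr_bigA -[RHS]sum_enum_val.
by apply: eq_bigr => k _; rewrite !mxE big_split.
Qed.

Lemma prod_eq_ffun (s t : qidx N) : \prod_m ((s m == t m)%:R : A) = (s == t)%:R.
Proof.
have [<-|st] := eqVneq s t; first by apply: big1 => m _; rewrite eqxx.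
have [m nm] : exists m, s m != t m.
  by apply/existsP; apply: contraR st => /existsPn eq_st; apply/eqP/ffunP => m; apply/eqP/negbNE.
by rewrite (bigD1 m) //= (negPf nm) mul0r.
Qed.

Lemma tensor_mx1 : tensor_mx (fun _ => 1%:M) = 1%:M.
Proof.
apply/matrixP=> i j; rewrite !mxE -(inj_eq enum_val_inj) -prod_eq_ffun.
by apply: eq_bigr => m _; rewrite mxE.
Qed.

Lemma site_mxE n K i j : let s := enum_val i in let t := enum_val j in
  site_mx n K i j = K (s n) (t n) * (s == set_at t n (s n))%:R.
Proof.
move=> s t; rewrite !mxE -prod_eq_ffun (bigD1 n) //= [in RHS](bigD1 n) //=.
rewrite eqxx ffunE !eqxx mul1r; congr (_ * _); apply: eq_bigr => m /negPf mn.
by rewrite mn mxE ffunE mn.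
Qed.

Lemma gmxpow_tensor F k : gmxpow (tensor_mx F) k = tensor_mx (fun m => gmxpow (F m) k).
Proof. by elim: k => [|k IHk] /=; rewrite ?tensor_mx1 // IHk tensor_mxM. Qed.

Lemma gmxpow1 n k : gmxpow (1%:M : 'M[A]_n) k = 1%:M.
Proof. by elim: k => //= k ->; rewrite mul1mx. Qed.

Lemma gmxpowZ n c (M : 'M[A]_n) k : gmxpow (c *: M) k = c ^+ k *: gmxpow M k.
Proof. by elim: k => [|k IHk] /=; rewrite ?scale1r // IHk -scalemxAl -scalemxAr scalerA exprSr. Qed.

Lemma tensor_rowM v F : tensor_row v *m tensor_mx F = tensor_row (fun m => v m *m F m).
Proof.
apply/rowP=> j; rewrite !mxE.
under [RHS]eq_bigr do rewrite mxE.
rewrite bigA_distr_bigA -[RHS]sum_enum_val.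
by apply: eq_bigr => k _; rewrite !mxE big_split.
Qed.

Lemma tensor_row_row (V : 'M[A]_3) (h : qidx N) :
  tensor_row (fun m => row (h m) V) = row (enum_rank h) (tensor_mx (fun _ => V)).
Proof. by apply/rowP=> j; rewrite !mxE enum_rankK; apply: eq_bigr => m _; rewrite mxE. Qed.

Lemma gptrace_KauxP (K : 'M[A]_3) n : gptrace (gKaux K *m Pmat n) = site_mx n K.
Proof.
apply/matrixP=> i j; rewrite [LHS]mxE; set s := enum_val i; set t := enum_val j.
have KP_entry a : (gKaux K *m Pmat n) (enum_rank ((a, s) : aidx N)) (enum_rank ((a, t) : aidx N))
    = K a (t n) * (s == set_at t n a)%:R.
  transitivity (\sum_(q : aidx N) K a q.1 * (s == q.2)%:R * (q == (t n, set_at t n a))%:R).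
    by rewrite mxE -[RHS]sum_enum_val; apply: eq_bigr => k _; rewrite !mxE !enum_rankK.
  rewrite (bigD1 (t n, set_at t n a)) //= eqxx mulr1 big1 ?addr0 // => q /negPf ->.
  by rewrite mulr0.
rewrite (eq_bigr _ (fun a _ => KP_entry a)) site_mxE (bigD1 (s n)) //= big1 ?addr0 //.
move=> a na; case: eqP => [sE|]; last by rewrite mulr0.
by move: na; rewrite sE ffunE !eqxx.
Qed.

Lemma bra_site_mx S (K : 'M[A]_3) h :
  bra S (fun n => site_mx n K) h = S *m tensor_mx (fun m => gmxpow K (h m)).
Proof.
rewrite /bra; congr (_ *m _).
have foldr_site l : uniq l -> foldr (fun n M => gmxpow (site_mx n K) (h n) *m M) 1%:M l =
    tensor_mx (fun m => if m \in l then gmxpow K (h m) else 1%:M).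
  elim: l => [_|n l IHl /= /andP[nl ul]]; first by rewrite -tensor_mx1.
  rewrite IHl // gmxpow_tensor tensor_mxM; congr tensor_mx; apply: funext => m.
  rewrite in_cons; case: eqVneq => [->|_] /=; first by rewrite (negPf nl) mulmx1.
  by rewrite gmxpow1 mul1mx.
by rewrite foldr_site ?enum_uniq //; congr tensor_mx; apply: funext => m; rewrite mem_enum.
Qed.

Lemma braZ S (a : 'I_N -> A) T h :
  bra S (fun n => a n *: T n) h = (\prod_n a n ^+ h n) *: bra S T h.
Proof.
rewrite /bra scalemxAr -big_enum /=; congr (_ *m _).
elim: (enum 'I_N) => [|n l IHl] /=; first by rewrite big_nil scale1r.
by rewrite IHl gmxpowZ big_cons -scalemxAl -scalemxAr scalerA.
Qed.

Lemma bra_mxZ S (a : 'I_N -> A) T :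
  bra_mx S (fun n => a n *: T n) =
  diag_mx (\row_i \prod_n a n ^+ (enum_val i : qidx N) n) *m bra_mx S T.
Proof.
by apply/matrixP=> i j; rewrite mul_diag_mx /bra_mx [LHS]mxE braZ !mxE.
Qed.

Lemma foldr_mulmx (I : Type) n (B : I -> 'M[A]_n) (l : seq I) (M : 'M[A]_n) :
  foldr (fun m X => B m *m X) M l = foldr (fun m X => B m *m X) 1%:M l *m M.
Proof. by elim: l => [|m l IHl] /=; rewrite ?mul1mx // IHl mulmxA. Qed.

Lemma foldr_scale (I : Type) n c (B : I -> 'M[A]_n) (l : seq I) :
  foldr (fun m X => (c *: B m) *m X) 1%:M l =
  c ^+ size l *: foldr (fun m X => B m *m X) 1%:M l.
Proof.
elim: l => [|m l IHl] /=; first by rewrite scale1r.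
by rewrite IHl -scalemxAl -scalemxAr scalerA exprS.
Qed.

Lemma foldr_pencil (I : Type) n x (a : I -> A) (B : I -> 'M[A]_n) (l : seq I) :
  exists J, foldr (fun m X => (a m *: 1%:M + x *: B m) *m X) 1%:M l =
            (\prod_(m <- l) a m) *: 1%:M + x *: J.
Proof.
elim: l => [|m l [J IHl]] /=; first by exists 0; rewrite big_nil scale1r scaler0 addr0.
exists (a m *: J + (\prod_(m <- l) a m) *: B m + x *: (B m *m J)).
rewrite IHl big_cons mulmxDl !mulmxDr -!scalemxAl -!scalemxAr !mul1mx !mulmx1.
by rewrite !scalerA !scalerDr !scalerA [x * a m]mulrC [x * (\prod_(j <- l) a j)]mulrC !addrA.
Qed.

Lemma pencil_sandwich n x a1 a2 (J1 J2 P : 'M[A]_n) : exists Z,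
  (a1 *: 1%:M + x *: J1) *m ((x *: P) *m (a2 *: 1%:M + x *: J2)) =
  x *: ((a1 * a2) *: P + x *: Z).
Proof.
exists (a1 *: (P *m J2) + a2 *: (J1 *m P) + x *: (J1 *m (P *m J2))).
rewrite !mulmxDl !mulmxDr -!scalemxAl -!scalemxAr !mul1mx !mulmx1 !scalerDr !scalerA.
by rewrite [a1 * (x * a2)]mulrCA [a1 * (x * x)]mulrC !addrA.
Qed.

(* At lam = xi n the n-th factor is R_{a,n}(0) = x e P_{a,n} and
   tr_a (K_a P_{a,n}) = K_n, while every other factor is a scalar up to O(x). *)
Lemma gtransfer_leading x e K xi n : exists J,
  gtransfer (x * e) K xi (xi n) =
  x *: ((\prod_(m | m != n) (xi n - xi m) * e) *: site_mx n K + x *: J).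
Proof.
set f := fun m => xi n - xi m.
have drop_n l : n \notin l -> \prod_(m <- l | m != n) f m = \prod_(m <- l) f m.
  move=> nl; rewrite big_seq_cond [RHS]big_seq; apply: eq_bigl => m.
  by case: (boolP (m \in l)) => //= ml; apply: contraNneq nl => <-.
have -> : \prod_(m | m != n) f m = \prod_(m <- rev (enum 'I_N) | m != n) f m.
  by rewrite big_rev big_enum_cond.
have RE : (fun m (M : 'M_dimAQ) => gRmat (x * e) m (xi n - xi m) *m M) =
          (fun m M => (f m *: 1%:M + x *: (e *: Pmat m)) *m M).
  by apply: funext => m; apply: funext => M; rewrite gRmatE scalerA.
rewrite /gtransfer /gRprod RE.
have: uniq (rev (enum 'I_N)) by rewrite rev_uniq enum_uniq.
have: n \in rev (enum 'I_N) by rewrite mem_rev mem_enum.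
move: (rev _) => l /splitPr[l1 l2].
rewrite cat_uniq /= => /and4P[_ /norP[nl1 _] nl2 _].
rewrite big_cat big_cons eqxx /= !drop_n // foldr_cat /= foldr_mulmx /f subrr scale0r add0r.
have [J1 ->] := foldr_pencil x f (fun m => e *: Pmat m) l1.
have [J2 ->] := foldr_pencil x f (fun m => e *: Pmat m) l2.
set a1 := \prod_(m <- l1) f m; set a2 := \prod_(m <- l2) f m; set P := e *: Pmat n.
have [Z ->] := pencil_sandwich x a1 a2 J1 J2 P.
exists (gptrace (gKaux K *m Z)).
rewrite -scalemxAr gptraceZ mulmxDr gptraceD -!scalemxAr !gptraceZ.
by rewrite gptrace_KauxP !scalerA.
Qed.

End GenericTransfer.

Section GenericTransferMorphism.
Variables (A B : comNzRingType) (f : {rmorphism A -> B}) (N : nat).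

Lemma map_gmxT (T : finType) (F : T -> T -> A) :
  map_mx f (gmxT F) = gmxT (fun s t => f (F s t)).
Proof. by apply/matrixP=> i j; rewrite !mxE. Qed.

Lemma map_gtransfer eta K xi lam :
  map_mx f (gtransfer (N := N) eta K xi lam) =
  gtransfer (f eta) (map_mx f K) (f \o xi) (f lam).
Proof.
have map_gKaux : map_mx f (gKaux N K) = gKaux N (map_mx f K).
  by rewrite map_gmxT; apply: eq_gmxT => p q; rewrite rmorphM rmorph_nat mxE.
have map_gRprod : map_mx f (gRprod eta xi lam) = gRprod (f eta) (f \o xi) (f lam).
  rewrite /gRprod; elim: (rev _) => [|n l IHl] /=; first exact: map_mx1.
  rewrite map_mxM IHl map_gmxT; congr (_ *m _); apply: eq_gmxT => p q.
  by rewrite rmorphD !rmorphM !rmorph_nat rmorphB.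
rewrite /gtransfer /gptrace map_gmxT; apply: eq_gmxT => s t; rewrite rmorph_sum.
by apply: eq_bigr => a _; rewrite -map_gKaux -map_gRprod -map_mxM [RHS]mxE.
Qed.

Lemma map_gmxpow n (M : 'M[A]_n) k : map_mx f (gmxpow M k) = gmxpow (map_mx f M) k.
Proof. by elim: k => [|k IHk] /=; rewrite ?map_mx1 // map_mxM IHk. Qed.

Lemma map_bra_mx S T :
  map_mx f (bra_mx (N := N) S T) = bra_mx (map_mx f S) (fun n => map_mx f (T n)).
Proof.
apply/row_matrixP=> i; rewrite -map_row !rowK /bra map_mxM; congr (_ *m _).
by elim: (enum _) => [|n l IHl] /=; rewrite ?map_mx1 // map_mxM IHl map_gmxpow.
Qed.

Lemma map_site_mx n K : map_mx f (site_mx n K) = site_mx (N := N) n (map_mx f K).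
Proof.
rewrite map_gmxT; apply: eq_gmxT => s t; rewrite rmorph_prod; apply: eq_bigr => m _.
by case: eqP => _; rewrite !mxE ?rmorph_nat.
Qed.

End GenericTransferMorphism.

Section FieldTransfer.
Variables (C : fieldType) (N : nat).

Lemma gtransfer_homog eta K (c : 'I_N -> C) n u : u != 0 ->
  gtransfer eta K (fun m => c m / u) (c n / u) = u^-1 ^+ N *: gtransfer (u * eta) K c (c n).
Proof.
move=> u0; rewrite /gtransfer /gRprod -gptraceZ scalemxAr.
have RE : (fun m (M : 'M_#|{: aidx N}|) => gRmat eta m (c n / u - c m / u) *m M) =
          (fun m M => (u^-1 *: gRmat (u * eta) m (c n - c m)) *m M).
  apply: funext => m; apply: funext => M.
  by rewrite -mulrBl !gRmatE scalerDr !scalerA mulKf // mulrC.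
by rewrite RE foldr_scale size_rev size_enum_ord.
Qed.

Lemma tensor_mxV (F : 'I_N -> 'M[C]_3) : (forall m, F m \in unitmx) ->
  tensor_mx F *m tensor_mx (fun m => invmx (F m)) = 1%:M.
Proof.
by move=> Fu; rewrite tensor_mxM -tensor_mx1; congr tensor_mx; apply: funext => m; rewrite mulmxV.
Qed.

Lemma tensor_mx_unit (F : 'I_N -> 'M[C]_3) : (forall m, F m \in unitmx) ->
  tensor_mx F \in unitmx.
Proof. by move/tensor_mxV/mulmx1_unit => []. Qed.

Lemma invmx_tensor_mx (F : 'I_N -> 'M[C]_3) : (forall m, F m \in unitmx) ->
  invmx (tensor_mx F) = tensor_mx (fun m => invmx (F m)).
Proof.
move=> Fu; have FV := tensor_mxV Fu.
by rewrite -[invmx _]mulmx1 -FV mulmxA mulVmx ?mul1mx // tensor_mx_unit.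
Qed.

Lemma gmxpow_conj (W X : 'M[C]_3) k : W \in unitmx ->
  gmxpow (W *m X *m invmx W) k = W *m gmxpow X k *m invmx W.
Proof.
move=> Wu; elim: k => [|k IHk] /=; first by rewrite mulmx1 mulmxV.
by rewrite IHk !mulmxA -[_ *m invmx W *m W]mulmxA mulVmx // mulmx1.
Qed.

Definition krylov_mx (w : 'rV[C]_3) (J : 'M[C]_3) : 'M[C]_3 :=
  \matrix_(k < 3) (w *m gmxpow J k).

Lemma bra_mx_site_conj (w : 'rV[C]_3) (W J : 'M[C]_3) : W \in unitmx ->
  bra_mx (tensor_row (fun _ => w) *m invmx (tensor_mx (fun _ : 'I_N => W)))
         (fun n => site_mx n (W *m J *m invmx W)) =
  tensor_mx (fun _ => krylov_mx w J) *m tensor_mx (fun _ => invmx W).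
Proof.
move=> Wu.
apply/row_matrixP => i; rewrite rowK bra_site_mx row_mul -{2}(enum_valK i).
rewrite -tensor_row_row (invmx_tensor_mx (fun=> Wu)) -mulmxA !tensor_mxM !tensor_rowM.
congr tensor_row; apply: funext => m.
by rewrite gmxpow_conj // !mulmxA mulmxKV // rowK.
Qed.

Lemma bra_mx_site_unit (w : 'rV[C]_3) (W J : 'M[C]_3) :
  W \in unitmx -> krylov_mx w J \in unitmx ->
  bra_mx (tensor_row (fun _ => w) *m invmx (tensor_mx (fun _ : 'I_N => W)))
         (fun n => site_mx n (W *m J *m invmx W)) \in unitmx.
Proof.
move=> W_unit V_unit; rewrite bra_mx_site_conj // unitmx_mul !tensor_mx_unit //.
by move=> _; rewrite unitmx_inv.
Qed.

End FieldTransfer.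

Lemma det_mx33 (R : comPzRingType) (M : 'M[R]_3) :
  \det M = M 0 0 * (M 1 1 * M 2 2 - M 1 2 * M 2 1)
         - M 0 1 * (M 1 0 * M 2 2 - M 1 2 * M 2 0)
         + M 0 2 * (M 1 0 * M 2 1 - M 1 1 * M 2 0).
Proof.
pose f i j := M (inord i) (inord j).
have -> : \det M = \det (\matrix_(i < 3, j < 3) f i j).
  by congr (\det _); apply/matrixP => i j; rewrite mxE /f !inord_val.
rewrite (expand_det_row _ 0) !big_ord_recl big_ord0 /cofactor.
rewrite !(expand_det_row _ 0) !big_ord_recl !big_ord0 /cofactor !det_mx11 !mxE /= /bump /=.
have i0 : inord 0 = 0 :> 'I_3 by apply: val_inj; rewrite /= inordK.
have i1 : inord 1 = 1 :> 'I_3 by apply: val_inj; rewrite /= inordK.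
have i2 : inord 2 = 2 :> 'I_3 by apply: val_inj; rewrite /= inordK.
rewrite /f !add0n !addn0 i0 i1 i2; ring.
Qed.

Section JordanKrylov.
Variable C : fieldType.

Definition covec3 (x y z : C) : 'rV[C]_3 :=
  \row_(k < 3) if k == 0%N :> nat then x else if k == 1%N :> nat then y else z.

Lemma prod_covecE N x y z : prod_covec N x y z = tensor_row (fun _ => covec3 x y z).
Proof. by apply/rowP => j; rewrite !mxE; apply: eq_bigr => m _; rewrite mxE. Qed.

Lemma krylov_KJ_unit (x y z k0 k1 k2 y1 y2 : C) :
  (jcase1 k0 k1 k2 y1 y2 -> x * y * z != 0) ->
  (jcase2 k0 k1 k2 y1 y2 -> x * z != 0) ->
  (jcase3 k0 k1 k2 y1 y2 -> x != 0) ->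
  jcase1 k0 k1 k2 y1 y2 \/ jcase2 k0 k1 k2 y1 y2 \/ jcase3 k0 k1 k2 y1 y2 ->
  krylov_mx (covec3 x y z) (KJ k0 k1 k2 y1 y2) \in unitmx.
Proof.
move=> h1 h2 h3 hc; rewrite unitmxE unitfE det_mx33 !mxE /= !mul1mx.
rewrite !big_ord_recr !big_ord0 /= !mxE /= !big_ord_recr !big_ord0 /= !mxE /=.
case: hc => [hc|[hc|hc]].
- have := h1 hc; case: hc => n01 n02 n12 -> -> xyz_neq0.
  rewrite [X in X != 0](_ : _ = x * y * z * ((k1 - k0) * (k2 - k0) * (k2 - k1))); last by ring.
  rewrite !mulf_eq0 !negb_or in xyz_neq0; case/andP: xyz_neq0 => /andP[x0 y0] z0.
  by rewrite !mulf_neq0 //; rewrite subr_eq0 eq_sym.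
- have := h2 hc; case: hc => -> n12 -> -> xz_neq0.
  rewrite [X in X != 0](_ : _ = x * z * x * ((k2 - k1) * (k2 - k1))); last by ring.
  rewrite mulf_eq0 negb_or in xz_neq0; case/andP: xz_neq0 => x0 z0.
  by rewrite !mulf_neq0 //; rewrite subr_eq0 eq_sym.
- have := h3 hc; case: hc => -> -> -> -> x_neq0.
  rewrite [X in X != 0](_ : _ = x * x * x); last by ring.
  by rewrite !mulf_neq0.
Qed.
Lemma GammaWE N (W : 'M[C]_3) : GammaW N W = tensor_mx (fun _ => W).
Proof. by []. Qed.

End JordanKrylov.

Section Genericity.
Variables (C : numFieldType) (N : nat).

Lemma poly_exists_nonroot_neq0 (p : {poly C}) : p != 0 ->
  exists2 u : C, u != 0 & ~~ root p u.
Proof.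
move=> p_neq0; set s := [seq k.+1%:R : C | k <- iota 0 (size p)].
have [/allP s_roots|/allPn[u /mapP[k _ ->] nroot]] := boolP (all (root p) s); last first.
  by exists k.+1%:R; rewrite ?pnatr_eq0.
have := max_poly_roots p_neq0 (introT allP s_roots).
rewrite map_inj_uniq ?iota_uniq; last by move=> a b /eqP; rewrite eqr_nat => /eqP [].
by rewrite size_map size_iota ltnn => /(_ isT).
Qed.

Lemma unitmx_diag_monomial (d : 'I_N -> C) : (forall n, d n != 0) ->
  diag_mx (\row_(i < #|qidx N|) \prod_n d n ^+ (enum_val i : qidx N) n) \in unitmx.
Proof.
move=> d_neq0; rewrite unitmxE det_diag unitfE; apply/prodf_neq0 => i _.
by rewrite mxE; apply/prodf_neq0 => n _; rewrite expf_neq0.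
Qed.

Lemma map_horner_polyC m n u (M : 'M[C]_(m, n)) :
  map_mx (horner_eval u) (map_mx polyC M) = M.
Proof. by apply/matrixP => i j; rewrite !mxE /= horner_evalE hornerC. Qed.

Lemma bra_mx_leading_unit (S : 'rV[C]_#|qidx N|) (L : 'I_N -> 'M[C]_#|qidx N|)
    (J T : 'I_N -> 'M[{poly C}]_#|qidx N|) :
  (forall n, T n = 'X *: (map_mx polyC (L n) + 'X *: J n)) ->
  bra_mx S L \in unitmx ->
  exists2 u : C, u != 0 & map_mx (horner_eval u) (bra_mx (map_mx polyC S) T) \in unitmx.
Proof.
move=> TE SL_unit; pose B := bra_mx (map_mx polyC S) (fun n => map_mx polyC (L n) + 'X *: J n).
have -> : bra_mx (map_mx polyC S) T =
          diag_mx (\row_i \prod_n 'X ^+ (enum_val i : qidx N) n) *m B.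
  by rewrite -bra_mxZ; congr bra_mx; apply: funext => n.
have map_B u : map_mx (horner_eval u) B =
    bra_mx S (fun n => L n + u *: map_mx (horner_eval u) (J n)).
  rewrite map_bra_mx map_horner_polyC; congr bra_mx; apply: funext => n.
  by rewrite map_mxD map_mxZ map_horner_polyC /= horner_evalE hornerX.
have detB0 : (\det B).[0] != 0.
  rewrite -horner_evalE -det_map_mx map_B -unitfE -unitmxE.
  by rewrite (_ : (fun n => _) = L) //; apply: funext => n; rewrite scale0r addr0.
have [|u u_neq0 detBu] := poly_exists_nonroot_neq0 (p := \det B).
  by apply: contraNneq detB0 => ->; rewrite horner0.
exists u => //; rewrite map_mxM unitmx_mul map_diag_mx.
rewrite !unitmxE !unitfE det_map_mx detBu andbT det_diag; apply/prodf_neq0 => i _.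
rewrite !mxE /= horner_evalE horner_prod; apply/prodf_neq0 => n _.
by rewrite hornerXn expf_neq0.
Qed.

Lemma map_horner_gtransfer u eta K (c : 'I_N -> C) n :
  map_mx (horner_eval u)
    (gtransfer ('X * eta%:P) (map_mx polyC K) (fun m => (c m)%:P) (c n)%:P) =
  gtransfer (u * eta) K c (c n).
Proof.
rewrite map_gtransfer map_horner_polyC /= !horner_evalE hornerM hornerX !hornerC.
by congr gtransfer; apply: funext => m; rewrite /= horner_evalE hornerC.
Qed.

Lemma exists_coupling_unit eta K (c : 'I_N -> C) S :
  eta != 0 -> injective c -> bra_mx S (fun n => site_mx n K) \in unitmx ->
  exists2 u : C, u != 0 & bra_mx S (fun n => gtransfer (u * eta) K c (c n)) \in unitmx.
Proof.
move=> eta_neq0 c_inj SK_unit.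
pose TX n := gtransfer ('X * eta%:P) (map_mx polyC K) (fun m => (c m)%:P) (c n)%:P.
pose d n := \prod_(m | m != n) (c n - c m) * eta.
have d_neq0 n : d n != 0.
  rewrite mulf_neq0 //; apply/prodf_neq0 => m mn; rewrite subr_eq0.
  by apply: contra mn => /eqP/c_inj ->.
have lead n : exists J, TX n = 'X *: (map_mx polyC (d n *: site_mx n K) + 'X *: J).
  rewrite /TX; have [J ->] := gtransfer_leading 'X eta%:P (map_mx polyC K) (fun m => (c m)%:P) n.
  exists J; rewrite map_mxZ map_site_mx /d rmorphM rmorph_prod.
  by under [in RHS]eq_bigr do rewrite rmorphB.
have [J TE] := fin_all_exists lead.
have [|u u_neq0 unit_u] := bra_mx_leading_unit (S := S) TE.
  by rewrite bra_mxZ unitmx_mul unitmx_diag_monomial.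
exists u => //.
have -> : (fun n => gtransfer (u * eta) K c (c n)) = fun n => map_mx (horner_eval u) (TX n).
  by apply: funext => n; rewrite map_horner_gtransfer.
by rewrite -(map_horner_polyC u S) -map_bra_mx.
Qed.

Lemma exists_xi_unit eta K S : eta != 0 -> bra_mx S (fun n => site_mx n K) \in unitmx ->
  exists xi : 'I_N -> C, bra_mx S (fun n => gtransfer eta K xi (xi n)) \in unitmx.
Proof.
move=> eta_neq0 SK_unit; pose c (m : 'I_N) : C := m%:R.
have c_inj : injective c by move=> m m' /eqP; rewrite eqr_nat => /eqP /val_inj.
have [u u_neq0 unit_u] := exists_coupling_unit eta_neq0 c_inj SK_unit.
exists (fun m => c m / u).
rewrite (_ : (fun n => _) = fun n => u^-1 ^+ N *: gtransfer (u * eta) K c (c n)).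
  rewrite bra_mxZ unitmx_mul unit_u andbT unitmx_diag_monomial // => n.
  by rewrite expf_neq0 ?invr_eq0.
by apply: funext => n; rewrite gtransfer_homog.
Qed.

End Genericity.

Definition sov_det (A : comNzRingType) N eta (K : 'M[A]_3) (xi : 'I_N -> A) S :=
  \det (bra_mx S (fun n => gtransfer eta K xi (xi n))).

Lemma meval_sov_det (C : comNzRingType) N n (v : 'I_n -> C) eta K
    (xi : 'I_N -> {mpoly C[n]}) S :
  (sov_det eta%:MP (map_mx (fun a => a%:MP) K) xi S).@[v] =
  sov_det eta K (fun m => (xi m).@[v]) (map_mx (meval v) S).
Proof.
rewrite /sov_det -det_map_mx map_bra_mx; congr (\det (bra_mx _ _)); apply: funext => m.
rewrite map_gtransfer /= mevalC; congr gtransfer.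
by apply/matrixP => i j; rewrite !mxE /= mevalC.
Qed.

Lemma bra_mx_basis (C : fieldType) N (S : 'rV[C]_#|qidx N|) T :
  bra_mx S T \in unitmx -> basis_of fullv [seq bra S T h | h <- enum {ffun 'I_N -> 'I_3}].
Proof.
move=> unit_ST; set X := [seq _ | h <- _].
have spanX : <<X>>%VS = fullv.
  apply/eqP; rewrite eqEsubv subvf /=; apply/subvP => v _.
  rewrite -[v](mulmxKV unit_ST) mulmx_sum_row; apply: memv_suml => i _; apply: memvZ.
  by rewrite rowK; apply: memv_span; apply: map_f; rewrite mem_enum.
by rewrite /basis_of spanX eqxx /free spanX dimvf dim_matrix size_map -cardE; apply/eqP/mul1n.
Qed.

Lemma sov_basis_det (C : fieldType) N eta K (xi : 'I_N -> C) S :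
  sov_det eta K xi S != 0 -> sov_basis eta K xi S.
Proof. by rewrite -unitfE -unitmxE; apply: bra_mx_basis. Qed.

Section MpolySov.
Variables (C : fieldType) (N : nat).

Lemma exists_mpoly_sov_basis n eta K (SX : 'rV[{mpoly C[n]}]_#|qidx N|)
    (xiX : 'I_N -> {mpoly C[n]}) v0 :
  sov_det eta K (fun m => (xiX m).@[v0]) (map_mx (meval v0) SX) != 0 ->
  exists2 P : {mpoly C[n]}, P != 0 &
    forall v, P.@[v] != 0 -> sov_basis eta K (fun m => (xiX m).@[v]) (map_mx (meval v) SX).
Proof.
move=> det_v0; exists (sov_det eta%:MP (map_mx (fun a => a%:MP) K) xiX SX).
  by apply: contraNneq det_v0 => P0; rewrite -meval_sov_det P0 meval0.
by move=> v; rewrite meval_sov_det; apply: sov_basis_det.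
Qed.

Lemma meval_coords_row (S : 'rV[C]_#|qidx N|) xi :
  map_mx (meval (coords S xi)) (\row_j 'X_(lshift N j)) = S.
Proof. by apply/rowP => j; rewrite !mxE mevalXU /coords (unsplitK (inl _ j)). Qed.

Lemma meval_coords_xi (S : 'rV[C]_#|qidx N|) xi :
  (fun m => ('X_(rshift #|qidx N| m) : {mpoly C[_]}).@[coords S xi]) = xi.
Proof. by apply: funext => m; rewrite mevalXU /coords (unsplitK (inr _ m)). Qed.

Lemma meval_mpolyC_mx n (v : 'I_n -> C) p q (M : 'M[C]_(p, q)) :
  map_mx (meval v) (map_mx (fun a => a%:MP) M) = M.
Proof. by apply/matrixP => i j; rewrite !mxE /= mevalC. Qed.

Lemma meval_X (v : 'I_N -> C) : (fun m => ('X_m : {mpoly C[N]}).@[v]) = v.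
Proof. by apply: funext => m; rewrite mevalXU. Qed.

End MpolySov.

Theorem proposition5p3 (R : realType) (eta : R[i]) (N : nat)
  (K W : 'M[R[i]]_3) (k0 k1 k2 y1 y2 : R[i]) :
  (0 < N)%N -> eta != 0 -> wsimple K ->
  W \in unitmx -> K = W *m KJ k0 k1 k2 y1 y2 *m invmx W ->
  jcase1 k0 k1 k2 y1 y2 \/ jcase2 k0 k1 k2 y1 y2 \/ jcase3 k0 k1 k2 y1 y2 ->
  (exists P : {mpoly R[i][#|{ffun 'I_N -> 'I_3}| + N]},
     P != 0 /\
     forall (S : 'rV[R[i]]_#|{ffun 'I_N -> 'I_3}|) (xi : 'I_N -> R[i]),
       admissible eta xi -> P.@[coords S xi] != 0 ->
       sov_basis eta K xi S)
  /\
  (forall x y z : R[i],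
     (jcase1 k0 k1 k2 y1 y2 -> x * y * z != 0) ->
     (jcase2 k0 k1 k2 y1 y2 -> x * z != 0) ->
     (jcase3 k0 k1 k2 y1 y2 -> x != 0) ->
     exists Q : {mpoly R[i][N]},
       Q != 0 /\
       forall xi : 'I_N -> R[i],
         admissible eta xi -> Q.@[xi] != 0 ->
         sov_basis eta K xi (prod_covec N x y z *m invmx (GammaW N W))).
Proof.
move=> _ eta_neq0 _ W_unit KE cases.
have generic_xi x y z : (jcase1 k0 k1 k2 y1 y2 -> x * y * z != 0) ->
    (jcase2 k0 k1 k2 y1 y2 -> x * z != 0) -> (jcase3 k0 k1 k2 y1 y2 -> x != 0) ->
    exists xi, sov_det eta K xi (prod_covec N x y z *m invmx (GammaW N W)) != 0.
  move=> h1 h2 h3; have V_unit := krylov_KJ_unit h1 h2 h3 cases.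
  have [xi unit_xi] := exists_xi_unit eta_neq0 (bra_mx_site_unit N W_unit V_unit).
  by exists xi; rewrite /sov_det -unitfE -unitmxE prod_covecE GammaWE KE.
split.
  have one3 : (1 : R[i]) * 1 * 1 != 0 by rewrite !mul1r oner_neq0.
  have one2 : (1 : R[i]) * 1 != 0 by rewrite mul1r oner_neq0.
  have [xi det_xi] := generic_xi 1 1 1 (fun=> one3) (fun=> one2) (fun=> oner_neq0 _).
  have [|P P_neq0 P_basis] := @exists_mpoly_sov_basis _ N _ eta K (\row_j 'X_(lshift N j))
    (fun m => 'X_(rshift _ m)) (coords (prod_covec N 1 1 1 *m invmx (GammaW N W)) xi).
    by rewrite meval_coords_row meval_coords_xi.
  exists P; split=> // S xi' _.
  by have := P_basis (coords S xi'); rewrite meval_coords_row meval_coords_xi.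
move=> x y z h1 h2 h3; have [xi det_xi] := generic_xi x y z h1 h2 h3.
set S := prod_covec N x y z *m invmx (GammaW N W).
have [|Q Q_neq0 Q_basis] :=
  @exists_mpoly_sov_basis _ N _ eta K (map_mx (fun a => a%:MP) S) (fun m => 'X_m) xi.
  by rewrite meval_mpolyC_mx meval_X.
exists Q; split=> // xi' _.
by have := Q_basis xi'; rewrite meval_mpolyC_mx meval_X.
Qed.
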